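(* Let $(X,d)$ be a compact metric space, let $\{f_n\}_{n\in\mathbb{N}}$ be a sequence of homeomorphisms of $X$ and let $f$ be a homeomorphism of $X$ such that $f_n\to f$ uniformly and $f_n^{-1}\to f^{-1}$ uniformly on $X$. Then for $x\in X$: (1) $x\in U_f(X)$ if and only if there exists $\delta>0$ such that for every pair of distinct points $y,z\in B(x,\delta)$, $\bigcup_{m\ge 1}\bigcap_{n\ge m}E_z(f_n,y,\delta)\neq\emptyset$; (2) $x\in M_f(X)$ if and only if there exists $\delta>0$ such that for each $y\in B(x,\delta)$ and every pair of distinct points $u,v\in\overline{\mathcal{O}_f(y)}$, $\bigcup_{m\ge 1}\bigcap_{n\ge m}E_v(f_n,u,\delta)\neq\emptyset$.
   Context: For a homeomorphism $f$ of a compact metric space $(X,d)$: $B(x,\epsilon)=\{y: d(x,y)<\epsilon\}$, $\mathcal{O}_f(x)=\{f^n(x):n\in\mathbb{Z}\}$, and for $x,y\in X$, $\epsilon>0$, $E_y(f,x,\epsilon)=\{n\in\mathbb{Z}: d(f^n(x),f^n(y))>\epsilon\}$ (negative powers are iterates of $f^{-1}$). $f$ is expansive on a subset $A\subset X$ with expansivity constant $\mathfrak{c}>0$ if for every pair of distinct $x,y\in A$ there is $n\in\mathbb{Z}$ with $d(f^n(x),f^n(y))>\mathfrak{c}$. $U_f(X)$ is the set of points $x$ for which there is $\mathfrak{c}>0$ such that $f$ is expansive on $B(x,\mathfrak{c})$ with constant $\mathfrak{c}$. $M_f(X)$ is the set of points $x$ for which there is $\mathfrak{c}>0$ such that for every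 $y\in B(x,\mathfrak{c})$, $f$ is expansive on $\overline{\mathcal{O}_f(y)}$ with constant $\mathfrak{c}$. *)

From Stdlib Require Import Reals ZArith List.
Open Scope R_scope.

Record is_metric {X : Type} (d : X -> X -> R) : Prop := {
  metric_nonneg : forall x y, 0 <= d x y;
  metric_eq0 : forall x y, d x y = 0 <-> x = y;
  metric_sym : forall x y, d x y = d y x;
  metric_tri : forall x y z, d x z <= d x y + d y z }.

Definition ball {X : Type} (d : X -> X -> R) (x : X) (eps : R) : X -> Prop :=
  fun y => d x y < eps.

Definition d_open {X : Type} (d : X -> X -> R) (U : X -> Prop) : Prop :=
  forall x, U x -> exists e, 0 < e /\ forall y, ball d x e y -> U y.

Definition d_compact {X : Type} (d : X -> X -> R) : Prop :=
  forall (I : Type) (U : I -> X -> Prop),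
    (forall i, d_open d (U i)) -> (forall x, exists i, U i x) ->
    exists l : list I, forall x, exists i, In i l /\ U i x.

Definition d_continuous {X : Type} (d : X -> X -> R) (f : X -> X) : Prop :=
  forall x e, 0 < e -> exists dl, 0 < dl /\ forall y, d x y < dl -> d (f x) (f y) < e.

Definition homeo {X : Type} (d : X -> X -> R) (f finv : X -> X) : Prop :=
  (forall x, finv (f x) = x) /\ (forall x, f (finv x) = x) /\
  d_continuous d f /\ d_continuous d finv.

Definition unif_conv {X : Type} (d : X -> X -> R) (g : nat -> X -> X) (h : X -> X) : Prop :=
  forall e, 0 < e -> exists N, forall n x, (N <= n)%nat -> d (g n x) (h x) < e.

Definition iterz {X : Type} (f finv : X -> X) (n : Z) (x : X) : X :=
  if Z.leb 0 n then Nat.iter (Z.to_nat n) f x else Nat.iter (Z.to_nat (- n)) finv x.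

Definition orbit {X : Type} (f finv : X -> X) (x : X) : X -> Prop :=
  fun y => exists n : Z, y = iterz f finv n x.

Definition closure {X : Type} (d : X -> X -> R) (A : X -> Prop) : X -> Prop :=
  fun z => forall e, 0 < e -> exists w, A w /\ d z w < e.

Definition Eset {X : Type} (d : X -> X -> R) (f finv : X -> X) (y x : X) (eps : R) : Z -> Prop :=
  fun n => d (iterz f finv n x) (iterz f finv n y) > eps.

Definition expansive_on {X : Type} (d : X -> X -> R) (f finv : X -> X) (A : X -> Prop) (c : R) : Prop :=
  forall x y, A x -> A y -> x <> y -> exists n : Z, d (iterz f finv n x) (iterz f finv n y) > c.

Definition Uf {X : Type} (d : X -> X -> R) (f finv : X -> X) : X -> Prop :=
  fun x => exists c, 0 < c /\ expansive_on d f finv (ball d x c) c.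

Definition Mf {X : Type} (d : X -> X -> R) (f finv : X -> X) : X -> Prop :=
  fun x => exists c, 0 < c /\ forall y, ball d x c y ->
     expansive_on d f finv (closure d (orbit f finv y)) c.

Definition liminf_E_nonempty {X : Type} (d : X -> X -> R) (fs fsinv : nat -> X -> X)
  (z y : X) (delta : R) : Prop :=
  exists k : Z, exists m : nat, (1 <= m)%nat /\
    forall n : nat, (m <= n)%nat -> Eset d (fs n) (fsinv n) z y delta k.

From Stdlib Require Import Reals ZArith Lra Lia.
Open Scope R_scope.

(* Uniform convergence of f_n to f and of f_n^-1 to f^-1, together with the
   continuity of f and f^-1, makes every iterate f_n^k converge pointwise to
   f^k.  Distances converge along with points, so a gap d(f^k y, f^k z) > c
   is eventually a gap for f_n^k, and conversely an eventual gap > c for the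
   f_n^k leaves a gap >= c for f^k; losing half of the constant absorbs the
   difference between > and >=. *)

Definition seq_conv {X : Type} (d : X -> X -> R) (p : nat -> X) (P : X) : Prop :=
  forall e, 0 < e -> exists N, forall n, (N <= n)%nat -> d (p n) P < e.

Section Metric.

Variables (X : Type) (d : X -> X -> R).
Hypothesis Hm : is_metric d.

Lemma dist_lipschitz (a b A B : X) :
  Rabs (d a b - d A B) <= d a A + d b B.
Proof.
  pose proof (metric_tri d Hm a A b) as T1.
  pose proof (metric_tri d Hm A B b) as T2.
  pose proof (metric_tri d Hm A a B) as T3.
  pose proof (metric_tri d Hm a b B) as T4.
  rewrite (metric_sym d Hm A a) in T3.
  rewrite (metric_sym d Hm B b) in T2.
  apply Rabs_le; lra.
Qed.

Lemma dist_seq_conv (p q : nat -> X) (P Q : X) :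
  seq_conv d p P -> seq_conv d q Q -> Un_cv (fun n => d (p n) (q n)) (d P Q).
Proof.
  intros Hp Hq e He.
  destruct (Hp (e/2)) as [N1 HN1]; [lra|].
  destruct (Hq (e/2)) as [N2 HN2]; [lra|].
  exists (max N1 N2); intros n Hn; unfold R_dist.
  pose proof (dist_lipschitz (p n) (q n) P Q).
  assert (d (p n) P < e/2) by (apply HN1; lia).
  assert (d (q n) Q < e/2) by (apply HN2; lia).
  lra.
Qed.

Lemma Un_cv_eventually_gt (u : nat -> R) (l c : R) :
  Un_cv u l -> c < l -> exists N, forall n, (N <= n)%nat -> c < u n.
Proof.
  intros Hu Hcl.
  destruct (Hu (l - c)) as [N HN]; [lra|].
  exists N; intros n Hn.
  specialize (HN n Hn); unfold R_dist in HN.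
  apply Rabs_def2 in HN; lra.
Qed.

Lemma Un_cv_ge_of_eventually_gt (u : nat -> R) (l c : R) (m : nat) :
  Un_cv u l -> (forall n, (m <= n)%nat -> c < u n) -> c <= l.
Proof.
  intros Hu Hgt.
  destruct (Rle_or_lt c l) as [Hle | Hlt]; [exact Hle|].
  destruct (Hu (c - l)) as [N HN]; [lra|].
  specialize (HN (max m N) ltac:(lia)); unfold R_dist in HN.
  specialize (Hgt (max m N) ltac:(lia)).
  apply Rabs_def2 in HN; lra.
Qed.

Lemma iter_seq_conv (g : nat -> X -> X) (h : X -> X) :
  d_continuous d h -> unif_conv d g h ->
  forall j y, seq_conv d (fun n => Nat.iter j (g n) y) (Nat.iter j h y).
Proof.
  intros Hc Hu j; induction j as [|j IH]; intros y e He; simpl.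
  - exists 0%nat; intros n _.
    rewrite (proj2 (metric_eq0 d Hm y y) eq_refl); lra.
  - destruct (Hc (Nat.iter j h y) (e/2)) as [dl [Hdl Hcd]]; [lra|].
    destruct (IH y dl Hdl) as [N1 HN1].
    destruct (Hu (e/2)) as [N2 HN2]; [lra|].
    exists (max N1 N2); intros n Hn.
    set (a := Nat.iter j (g n) y); set (b := Nat.iter j h y).
    assert (Hga : d (g n a) (h a) < e/2) by (apply HN2; lia).
    assert (Hhb : d (h b) (h a) < e/2).
    { apply Hcd; rewrite (metric_sym d Hm); apply HN1; lia. }
    pose proof (metric_tri d Hm (g n a) (h a) (h b)) as T.
    rewrite (metric_sym d Hm (h a) (h b)) in T; lra.
Qed.

End Metric.

Section Approximation.

Variables (X : Type) (d : X -> X -> R) (fs fsinv : nat -> X -> X) (f finv : X -> X).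
Hypotheses (Hm : is_metric d) (Hf : homeo d f finv)
  (Hfs : unif_conv d fs f) (Hfsinv : unif_conv d fsinv finv).

Lemma iterz_seq_conv (k : Z) (y : X) :
  seq_conv d (fun n => iterz (fs n) (fsinv n) k y) (iterz f finv k y).
Proof.
  destruct Hf as [_ [_ [Hc Hcinv]]]; unfold iterz.
  destruct (Z.leb 0 k); apply iter_seq_conv; assumption.
Qed.

Lemma iterz_dist_conv (k : Z) (y z : X) :
  Un_cv (fun n => d (iterz (fs n) (fsinv n) k y) (iterz (fs n) (fsinv n) k z))
        (d (iterz f finv k y) (iterz f finv k z)).
Proof. apply dist_seq_conv; [exact Hm | apply iterz_seq_conv ..]. Qed.

Lemma liminf_E_of_gap (k : Z) (y z : X) (c : R) :
  d (iterz f finv k y) (iterz f finv k z) > c -> liminf_E_nonempty d fs fsinv z y c.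
Proof.
  intros Hgap.
  destruct (Un_cv_eventually_gt _ _ c (iterz_dist_conv k y z) Hgap) as [N HN].
  exists k, (max 1 N); split; [lia|].
  intros n Hn; apply HN; lia.
Qed.

Lemma gap_of_liminf_E (y z : X) (c : R) :
  liminf_E_nonempty d fs fsinv z y c ->
  exists k, c <= d (iterz f finv k y) (iterz f finv k z).
Proof.
  intros [k [m [_ Hgap]]]; exists k.
  exact (Un_cv_ge_of_eventually_gt _ _ c m (iterz_dist_conv k y z) Hgap).
Qed.

Lemma expansive_on_liminf_E (A : X -> Prop) (c : R) :
  expansive_on d f finv A c ->
  forall y z, A y -> A z -> y <> z -> liminf_E_nonempty d fs fsinv z y c.
Proof.
  intros Hexp y z Hy Hz Hyz.
  destruct (Hexp y z Hy Hz Hyz) as [k Hk].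
  exact (liminf_E_of_gap k y z c Hk).
Qed.

Lemma liminf_E_expansive_on (A : X -> Prop) (c c' : R) :
  (forall y z, A y -> A z -> y <> z -> liminf_E_nonempty d fs fsinv z y c) ->
  c' < c -> expansive_on d f finv A c'.
Proof.
  intros HE Hc' y z Hy Hz Hyz.
  destruct (gap_of_liminf_E y z c (HE y z Hy Hz Hyz)) as [k Hk].
  exists k; lra.
Qed.

End Approximation.

Theorem theorem2p4 (X : Type) (d : X -> X -> R)
  (fs fsinv : nat -> X -> X) (f finv : X -> X) :
  is_metric d -> d_compact d ->
  (forall n, homeo d (fs n) (fsinv n)) -> homeo d f finv ->
  unif_conv d fs f -> unif_conv d fsinv finv ->
  forall x : X,
    (Uf d f finv x <->
      exists delta, 0 < delta /\
        forall y z, ball d x delta y -> ball d x delta z -> y <> z ->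
          liminf_E_nonempty d fs fsinv z y delta)
    /\
    (Mf d f finv x <->
      exists delta, 0 < delta /\
        forall y, ball d x delta y ->
          forall u v, closure d (orbit f finv y) u -> closure d (orbit f finv y) v -> u <> v ->
            liminf_E_nonempty d fs fsinv v u delta).
Proof.
  intros Hm _ _ Hf Hfs Hfsinv x.
  pose proof (expansive_on_liminf_E X d fs fsinv f finv Hm Hf Hfs Hfsinv) as to_liminf.
  pose proof (liminf_E_expansive_on X d fs fsinv f finv Hm Hf Hfs Hfsinv) as of_liminf.
  split; split.
  - intros [c [Hc Hexp]]; exists c; split; [exact Hc|].
    exact (to_liminf _ c Hexp).
  - intros [dl [Hdl HE]]; exists (dl/2); split; [lra|].
    apply (of_liminf _ dl); [|lra].
    intros y z Hy Hz; unfold ball in *; apply HE; lra.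
  - intros [c [Hc Hexp]]; exists c; split; [exact Hc|].
    intros y Hy; exact (to_liminf _ c (Hexp y Hy)).
  - intros [dl [Hdl HE]]; exists (dl/2); split; [lra|].
    intros y Hy; apply (of_liminf _ dl); [|lra].
    apply HE; unfold ball in *; lra.
Qed.
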